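(* Let $\psi:X\to Y$ be a function between two finite metric spaces such that $\psi(X)$ is $D$-dense in $Y$ for some $D\geq0$. Let $B\subseteq Y$ be nonempty with $|B|\leq|Y|/2$ and $1-N_Y(D)\frac{|\partial_D(B)|}{|B|}\geq\frac12$. Then either $A=\psi^{-1}(B)$ or $A=\psi^{-1}(Y\setminus B)$ satisfies $|A|\leq|X|/2$ and $|A|\geq\frac{1}{2N_Y(D)}|B|$.
   Context: A subset $S\subseteq Y$ is $D$-dense if every point of $Y$ is within distance $D$ of a point of $S$. $N_Y(D)=\sup_{y\in Y}|B(y,D)|$ (closed balls). $\partial_D(B)=\{y\in Y\setminus B: d(y,B)\leq D\}$ is the outer $D$-boundary. *)

From HB Require Import structures.
From mathcomp Require Import all_boot all_order all_algebra.
Set Implicit Arguments. Unset Strict Implicit. Unset Printing Implicit Defensive.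
Import Order.TTheory GRing.Theory Num.Theory.
Local Open Scope ring_scope.

Definition is_metric (R : realFieldType) (T : finType) (d : T -> T -> R) : Prop :=
  [/\ forall x y, 0 <= d x y,
      forall x y, d x y = 0 <-> x = y,
      forall x y, d x y = d y x &
      forall x y z, d x z <= d x y + d y z].

Definition cball (R : realFieldType) (T : finType) (d : T -> T -> R) (y : T) (D : R)
  : {set T} := [set z | d y z <= D].

(* N_Y(D) = sup_y |B(y,D)| (a max, the space being finite) *)
Definition NY (R : realFieldType) (T : finType) (d : T -> T -> R) (D : R) : nat :=
  (\max_(y : T) #|cball d y D|)%N.

Definition dense_in (R : realFieldType) (T : finType) (d : T -> T -> R) (D : R)
  (S : {set T}) : Prop :=
  forall y, exists2 s, s \in S & d y s <= D.

Definition oboundary (R : realFieldType) (T : finType) (d : T -> T -> R) (D : R)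
  (B : {set T}) : {set T} :=
  [set y | (y \notin B) && [exists b in B, d y b <= D]].

From HB Require Import structures.
From mathcomp Require Import all_boot all_order all_algebra.
From mathcomp Require Import zify lra.

(* Let S be B or its complement, and N = N_Y(D).  Every y in S is D-close to
   some psi x; if psi x leaves S, then y or psi x lies in the boundary E of B.
   So the D-balls around psi(psi^-1 S) and E cover S, whence
   |S| <= N (|psi^-1 S| + |E|).  The expansion hypothesis says 2 N |E| <= |B|,
   and |B| <= |S|, so both preimages have at least |B| / (2N) points; as they
   partition X, one of them has at most |X| / 2 points. *)

Set Implicit Arguments.
Unset Strict Implicit.
Unset Printing Implicit Defensive.

Import Order.TTheory GRing.Theory Num.Theory.
Local Open Scope ring_scope.

Lemma card_bigcup_le (T I : finType) (P : {set I}) (F : I -> {set T}) :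
  (#|\bigcup_(i in P) F i| <= \sum_(i in P) #|F i|)%N.
Proof.
elim/big_rec2: _ => [|A n U _ leUn]; first by rewrite cards0.
by rewrite (leq_trans (leq_card_setU _ U).1) ?leq_add2l.
Qed.

Section Covering.

Variables (R : realFieldType) (Y : finType) (dY : Y -> Y -> R) (D : R).

Lemma card_le_NY_mul (C S : {set Y}) :
  S \subset \bigcup_(z in C) cball dY z D -> (#|S| <= NY dY D * #|C|)%N.
Proof.
move=> /subset_leq_card/leq_trans; apply; apply: leq_trans (card_bigcup_le _ _) _.
rewrite mulnC -sum_nat_const; apply: leq_sum => z _.
exact: (leq_bigmax (F := fun y => #|cball dY y D|)).
Qed.

Lemma NY_gt0 (y : Y) : dY y y <= D -> (0 < NY dY D)%N.
Proof.
move=> dyy; apply: leq_trans (leq_bigmax (F := fun y => #|cball dY y D|) y).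
by apply/card_gt0P; exists y; rewrite inE.
Qed.

Definition separates (E S : {set Y}) : Prop :=
  forall y z, dY y z <= D -> y \in S -> z \notin S -> (y \in E) || (z \in E).

Hypotheses (hY : is_metric dY) (hD : 0 <= D).

Lemma metric_sym (y z : Y) : dY y z = dY z y.
Proof. by case: hY. Qed.

Lemma metric_refl_le (y : Y) : dY y y <= D.
Proof. by case: hY => _ d0 _ _; rewrite (proj2 (d0 y y)). Qed.

Lemma mem_oboundary (B : {set Y}) (y z : Y) :
  dY y z <= D -> y \in B -> z \notin B -> z \in oboundary dY D B.
Proof.
move=> dyz yB zB; rewrite inE zB; apply/existsP.
by exists y; rewrite yB metric_sym.
Qed.

Lemma oboundary_separates (B : {set Y}) : separates (oboundary dY D B) B.
Proof. by move=> y z dyz yB zB; rewrite (mem_oboundary dyz) ?orbT. Qed.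

Lemma oboundary_separatesC (B : {set Y}) : separates (oboundary dY D B) (~: B).
Proof.
move=> y z dyz; rewrite !in_setC negbK => yB zB.
by rewrite (mem_oboundary _ zB yB) // metric_sym.
Qed.

Variables (X : finType) (psi : X -> Y).
Hypothesis hdense : dense_in dY D (psi @: [set: X]).

Lemma subset_cover_preimset (E S : {set Y}) : separates E S ->
  S \subset \bigcup_(z in psi @: (psi @^-1: S) :|: E) cball dY z D.
Proof.
move=> sep; apply/subsetP => y yS.
have [_ /imsetP[x _ ->] dyx] := hdense y.
have dxy : y \in cball dY (psi x) D by rewrite inE metric_sym.
have [xS | xS] := boolP (psi x \in S).
  by apply/bigcupP; exists (psi x) => //; rewrite in_setU imset_f // inE.
case/orP: (sep _ _ dyx yS xS) => [yE | xE]; apply/bigcupP.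
  by exists y; [rewrite in_setU yE orbT | rewrite inE metric_refl_le].
by exists (psi x) => //; rewrite in_setU xE orbT.
Qed.

Lemma card_le_NY_preimset (E S : {set Y}) : separates E S ->
  (#|S| <= NY dY D * (#|psi @^-1: S| + #|E|))%N.
Proof.
move=> /subset_cover_preimset/card_le_NY_mul/leq_trans; apply.
by rewrite leq_mul2l (leq_trans (leq_card_setU _ _).1) ?leq_add2r ?leq_imset_card ?orbT.
Qed.

End Covering.

Lemma leq_mul_of_cover (b s a e n : nat) :
  (b <= s -> s <= n * (a + e) -> 2 * (n * e) <= b -> b <= 2 * n * a)%N.
Proof. by move=> *; nia. Qed.

Section RealBounds.

Variable R : realFieldType.

Lemma double_mul_le_of_ratio (n e b : nat) : (0 < b)%N ->
  1 - n%:R * (e%:R / b%:R) >= 1 / 2 :> R -> (2 * (n * e) <= b)%N.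
Proof.
move=> b_gt0 hexp; have b_gt0R : 0 < b%:R :> R by rewrite ltr0n.
have : n%:R * e%:R / b%:R <= 1 / 2 :> R by rewrite -mulrA; lra.
by rewrite ler_pdivrMr // -(ler_nat R) !natrM; lra.
Qed.

Lemma ler_nat_half (a x : nat) : (a%:R <= x%:R / 2 :> R) = (2 * a <= x)%N.
Proof. by rewrite -(ler_nat R) natrM; apply/idP/idP => h; lra. Qed.

Lemma ler_div_double_nat (b n a : nat) : (0 < n)%N ->
  (b <= 2 * n * a)%N -> b%:R / (2 * n%:R) <= a%:R :> R.
Proof.
move=> n_gt0; rewrite -(ler_nat R) !natrM => h.
by rewrite ler_pdivrMr ?mulr_gt0 ?ltr0n // mulrC.
Qed.

End RealBounds.

Theorem lemma3p17 (R : realFieldType) (X Y : finType)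
  (dX : X -> X -> R) (dY : Y -> Y -> R)
  (hX : is_metric dX) (hY : is_metric dY)
  (psi : X -> Y) (D : R) (hD : 0 <= D)
  (hdense : dense_in dY D (psi @: [set: X]))
  (B : {set Y}) (hB0 : B != set0)
  (hBsz : (#|B|%:R : R) <= #|Y|%:R / 2)
  (hexp : 1 - (NY dY D)%:R * (#|oboundary dY D B|%:R / #|B|%:R) >= 1 / 2 :> R) :
  exists A : {set X},
    (A = psi @^-1: B \/ A = psi @^-1: (~: B)) /\
    (#|A|%:R : R) <= #|X|%:R / 2 /\
    (#|A|%:R : R) >= #|B|%:R / (2 * (NY dY D)%:R).
Proof.
have [b0 _] := set0Pn _ hB0.
have N_gt0 := NY_gt0 (metric_refl_le hY hD b0).
have B_gt0 : (0 < #|B|)%N by rewrite card_gt0.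
have hE := double_mul_le_of_ratio B_gt0 hexp.
have hBC : (#|B| <= #|~: B|)%N.
  by move: hBsz; rewrite ler_nat_half; have := cardsC B; lia.
have coverB := card_le_NY_preimset hY hD hdense (oboundary_separates hY (B := B)).
have coverC := card_le_NY_preimset hY hD hdense (oboundary_separatesC hY (B := B)).
have lowB := leq_mul_of_cover (leqnn _) coverB hE.
have lowC := leq_mul_of_cover hBC coverC hE.
have := cardsC (psi @^-1: B); rewrite -preimsetC => card_X.
have [smallB | smallC] :
    (2 * #|psi @^-1: B| <= #|X|)%N \/ (2 * #|psi @^-1: ~: B| <= #|X|)%N by lia.
- exists (psi @^-1: B); split; first by left.
  by rewrite ler_nat_half; split; last exact: ler_div_double_nat.
- exists (psi @^-1: ~: B); split; first by right.
  by rewrite ler_nat_half; split; last exact: ler_div_double_nat.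
Qed.
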